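(* Let $n$ be a positive integer, $G=\mathbb{Z}\times\mathbb{Z}_n=\langle z\rangle\times\langle a\rangle$, and let $\mathcal{S}$ be a Schur ring over $G$ such that $\mathbb{Z}^{(n)}=\langle z^n\rangle$ is an $\mathcal{S}$-subgroup. Let $C$ be an $\mathcal{S}$-subset. Then $C$ is an $\mathcal{S}$-class if and only if $C^{(k)}$ is an $\mathcal{S}$-class for all integers $k$ with $\gcd(k,n)=1$.
   Context: $F$ is a field of characteristic $0$; $\mathbb{Z}=\langle z\rangle$ is infinite cyclic and $\mathbb{Z}_n=\langle a\rangle$ is cyclic of order $n$, written multiplicatively. For finite $C\subseteq G$, $\overline{C}=\sum_{g\in C}g\in F[G]$ and $C^*=\{g^{-1}:g\in C\}$. A Schur ring over $G$ is a subspace $\mathcal{S}=\mathrm{Span}_F\{\overline{C}:C\in\mathcal{D}\}$ of $F[G]$, where $\mathcal{D}=\mathcal{D}(\mathcal{S})$ is a partition of $G$ into finite subsets with $\{1\}\in\mathcal{D}$, $C\in\mathcal{D}\Rightarrow C^*\in\mathcal{D}$, and each product $\overline{C}\,\overline{D}$ ($C,D\in\mathcal{D}$) a finite $F$-linear combination of the $\overline{E}$, $E\in\mathcal{D}$. Members of $\mathcal{D}(\mathcal{S})$ are $\mathcal{S}$-classes (primitive sets); an $\mathcal{S}$-subset is a union of $\mathcal{S}$-classes; an $\mathcal{S}$-subgroup is a subgroup which is an $\mathcal{S}$-subset. For a subset $C$ and integer $k$, $C^{(k)}=\{g^k:g\in C\}$. *)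

From HB Require Import structures.
From mathcomp Require Import all_boot all_algebra.
From mathcomp Require Import boolp classical_sets functions cardinality fsbigop.
Set Implicit Arguments. Unset Strict Implicit. Unset Printing Implicit Defensive.
Import GRing.Theory.
Local Open Scope classical_set_scope.
Local Open Scope ring_scope.

(* The group G = Z x Z_n is written ADDITIVELY as the zmodType  int * 'I_n
   (with n = m.+1 > 0); z = (1,0), a = (0,1). *)
Definition ZxZn (m : nat) := (int * 'I_m.+1)%type.

Section SchurRings.
Variables (F : fieldType) (G : zmodType).

(* An element of F[G] is viewed as its coefficient function G -> F. *)
Definition bar (C : set G) : G -> F := fun x => (x \in C)%:R.

(* product in F[G] of finitely supported coefficient functions *)
Definition conv (f g : G -> F) : G -> F :=
  fun x => \sum_(y \in [set y | f y != 0]) f y * g (x - y).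

Definition inv_set (C : set G) : set G := [set - x | x in C].

Definition pow_set (C : set G) (k : int) : set G := [set x *~ k | x in C].

Definition is_partition (D : set (set G)) : Prop :=
  [/\ (forall C, D C -> C !=set0),
      (forall C E, D C -> D E -> C = E \/ C `&` E = set0) &
      (forall x, exists C, D C /\ C x)].

(* D = D(S) for a Schur ring S = Span_F { \bar C : C in D } over G *)
Definition is_schur_partition (D : set (set G)) : Prop :=
  [/\ is_partition D,
      (forall C, D C -> finite_set C),
      D [set 0],
      (forall C, D C -> D (inv_set C)) &
      (forall C E, D C -> D E ->
         exists s : seq (set G * F),
           (forall p, p \in s -> D p.1) /\
           conv (bar C) (bar E) = (fun x => \sum_(p <- s) p.2 * bar p.1 x))].

Definition S_subset (D : set (set G)) (C : set G) : Prop :=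
  exists Ds : set (set G), Ds `<=` D /\ C = \bigcup_(E in Ds) E.

Definition is_subgroup (H : set G) : Prop :=
  H 0 /\ (forall x y, H x -> H y -> H (x - y)).

Definition S_subgroup (D : set (set G)) (H : set G) : Prop :=
  is_subgroup H /\ S_subset D H.

End SchurRings.

Definition Zn_sub (m : nat) : set (ZxZn m) :=
  [set x | exists k : int, x = ((m.+1)%:Z * k, 0)].
Arguments Zn_sub m : clear implicits.

From HB Require Import structures.
From mathcomp Require Import all_boot all_algebra finmap.
From mathcomp Require Import boolp classical_sets functions cardinality fsbigop.
From mathcomp Require Import fingroup perm action pgroup sylow cyclic.
From mathcomp Require Import zify ring.
Set Implicit Arguments. Unset Strict Implicit. Unset Printing Implicit Defensive.
Import GRing.Theory Num.Theory.
Local Open Scope ring_scope.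

(* Let p be a prime and N a power of p.  Rotating N-tuples of elements of a
   class C is an action of a p-group whose fixed points are the constant
   tuples, so the coefficient of y in \bar C^N is congruent mod p to the number
   of c in C with c^N = y.  That coefficient is constant on classes, so in
   characteristic 0 every class meeting C^(N) lies in C^(N), provided x |-> x^N
   is injective on C.  For G = Z x Z_n and p coprime to n this shows that the
   class of x^p (x in C) lies in C^(p), and, inside <z^n>, that a class
   containing (z^n)^s consists of elements (z^n)^(+-s).  For the reverse
   inclusion take L = p^J = 1 mod n, large compared with C: then x = x^L h^-1
   with h = x^(L-1) in <z^n>, and transporting this factorisation to any c in C
   yields c = w^L h'^-1 with w^p in the class of x^p and h' = h^(+-1), which
   forces c = w.  So C^(p) is a class; products of primes and inversion give
   every k coprime to n. *)

Section Rotation.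
Variables (T : finType) (j : nat).

Definition ffun_rot (f : {ffun 'I_j -> T}) : {ffun 'I_j -> T} := [ffun l => f (ordS l)].

Lemma ffun_rot_inj : injective ffun_rot.
Proof.
move=> f g /ffunP fg; apply/ffunP => l.
by have := fg (ord_pred l); rewrite !ffunE ord_predK.
Qed.

Definition rot_perm := perm ffun_rot_inj.

Lemma rot_permE f : rot_perm f = ffun_rot f.
Proof. exact: permE. Qed.

Lemma val_iter_ordS (l : 'I_j) k : val (iter k (@ordS j) l) = ((l + k) %% j)%N.
Proof.
elim: k => [|k IHk] /=; first by rewrite addn0 modn_small.
by rewrite IHk addnS -addn1 modnDml addn1.
Qed.

Lemma rot_permX k f : (rot_perm ^+ k)%g f = [ffun l => f (iter k (@ordS j) l)].
Proof.
elim: k f => [|k IHk] f; first by rewrite expg0 perm1; apply/ffunP => l; rewrite ffunE.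
by rewrite expgSr permM IHk rot_permE; apply/ffunP => l; rewrite !ffunE -iterSr.
Qed.

Lemma rot_permXj : (rot_perm ^+ j = 1)%g.
Proof.
apply/permP => f; rewrite rot_permX perm1; apply/ffunP => l; rewrite ffunE.
by congr (f _); apply: val_inj; rewrite val_iter_ordS modnDr modn_small.
Qed.

Lemma rot_perm_fixed f (o : 'I_j) : rot_perm f = f -> f = [ffun => f o].
Proof.
rewrite rot_permE => fixf.
have f_iter k : f (iter k (@ordS j) o) = f o.
  elim: k => [//|k IHk]; rewrite iterS -IHk.
  by have /ffunP/(_ (iter k (@ordS j) o)) := fixf; rewrite ffunE.
apply/ffunP => l; have -> : l = iter (j - o + l) (@ordS j) o.
  by apply: val_inj; rewrite val_iter_ordS addnA subnKC 1?ltnW // modnDl modn_small.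
by rewrite ffunE f_iter.
Qed.

End Rotation.

Section TupleSums.
Variables (G : zmodType) (I : finType) (e : I -> G).

Definition sum_count (j : nat) (x : G) : nat :=
  #|[set f : {ffun 'I_j -> I} | \sum_(l < j) e (f l) == x]|.

Lemma sum_count0 x : sum_count 0 x = (x == 0).
Proof.
rewrite /sum_count; under eq_finset do rewrite big_ord0 eq_sym.
case: (x == 0); last by rewrite cards0.
by rewrite cardsT card_ffun card_ord.
Qed.

Lemma sum_countS j x : sum_count j.+1 x = (\sum_(k : I) sum_count j (x - e k))%N.
Proof.
pose cons_ffun (u : I * {ffun 'I_j -> I}) : {ffun 'I_j.+1 -> I} :=
  [ffun l => if unlift ord0 l is Some l' then u.2 l' else u.1].
pose uncons_ffun (f : {ffun 'I_j.+1 -> I}) := (f ord0, [ffun l => f (lift ord0 l)]).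
have cons_ffunK : cancel cons_ffun uncons_ffun.
  move=> [k f]; rewrite /uncons_ffun ffunE unlift_none; congr pair.
  by apply/ffunP => l; rewrite !ffunE liftK.
have uncons_ffunK : cancel uncons_ffun cons_ffun.
  move=> f; apply/ffunP => l; rewrite ffunE.
  by case: unliftP => [l' ->|->]; rewrite ?ffunE.
rewrite /sum_count -sum1dep_card; under [RHS]eq_bigr do rewrite -sum1dep_card.
rewrite (reindex cons_ffun) /=; last by exists uncons_ffun => u _.
rewrite pair_big_dep /=; apply: eq_bigl => -[k f] /=.
rewrite big_ord_recl /cons_ffun ffunE unlift_none /=.
under eq_bigr do rewrite ffunE liftK /=.
by rewrite addrC [in RHS]eq_sym subr_eq eq_sym.
Qed.

Lemma sum_count_pnat_mod (p : nat) j x : p.-nat j ->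
  sum_count j x = #|[set k | e k *+ j == x]| %[mod p].
Proof.
move=> pj; have j_gt0 : (0 < j)%N by case/andP: pj.
pose S := [set f : {ffun 'I_j -> I} | \sum_(l < j) e (f l) == x].
have p_rot : (p.-group <[rot_perm I j]>)%g.
  by rewrite /pgroup -orderE (pnat_dvd _ pj) // order_dvdn rot_permXj.
have act_rot : [acts <[rot_perm I j]>%g, on S | 'P]%g.
  rewrite cycle_subG; apply/astabsP => f; rewrite /= apermE rot_permE !inE.
  congr (_ == x); rewrite [RHS](reindex_inj (@ordS_inj j)) /=.
  by apply: eq_bigr => l _; rewrite ffunE.
rewrite /sum_count -/S (pgroup_fix_mod p_rot act_rot) afix_cycle.
pose o := Ordinal j_gt0; pose const (k : I) : {ffun 'I_j -> I} := [ffun => k].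
have const_inj : injective const by move=> k k' /ffunP/(_ o); rewrite !ffunE.
rewrite -(card_imset _ const_inj); congr (_ %% p)%N; apply: eq_card => f.
have sum_const k : \sum_(l < j) e (const k l) = e k *+ j.
  by under eq_bigr do rewrite ffunE; rewrite sumr_const card_ord.
apply/setIP/imsetP => [[Sf /afix1P /(rot_perm_fixed o) fE]|[k]].
  by exists (f o); rewrite // inE -sum_const /const -fE; rewrite inE in Sf.
rewrite inE => ekx ->; split; first by rewrite inE sum_const.
by apply/afix1P; rewrite /= apermE rot_permE; apply/ffunP => l; rewrite !ffunE.
Qed.

End TupleSums.

Local Open Scope classical_set_scope.

Section PowSet.
Variable G : zmodType.
Implicit Types (C : set G) (k : int).

Lemma pow_set1 C : pow_set C 1 = C.
Proof.
apply/seteqP; split => [_ [c Cc <-]|c Cc]; first by rewrite mulr1z.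
by exists c; rewrite ?mulr1z.
Qed.

Lemma pow_set0 C : C !=set0 -> pow_set C 0 = [set 0].
Proof.
move=> [c Cc]; apply/seteqP; split => [_ [? _ <-]|_ ->]; first by rewrite mulr0z.
by exists c; rewrite ?mulr0z.
Qed.

Lemma pow_setM C k1 k2 : pow_set (pow_set C k1) k2 = pow_set C (k1 * k2).
Proof.
apply/seteqP; split => [_ [_ [c Cc <-] <-]|_ [c Cc <-]].
  by exists c; rewrite // mulrzA.
by exists (c *~ k1); [exists c | rewrite mulrzA].
Qed.

Lemma pow_setN C k : pow_set C (- k) = inv_set (pow_set C k).
Proof.
apply/seteqP; split => [_ [c Cc <-]|_ [_ [c Cc <-] <-]].
  by exists (c *~ k); [exists c | rewrite mulrNz].
by exists c; rewrite // mulrNz.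
Qed.

End PowSet.

Definition same_class (G : zmodType) (D : set (set G)) (x y : G) : Prop :=
  exists E, [/\ D E, E x & E y].

Definition schur_span (F : fieldType) (G : zmodType) (D : set (set G))
    (f : G -> F) : Prop :=
  exists s : seq (set G * F), (forall q, q \in s -> D q.1) /\
    f = (fun x => \sum_(q <- s) q.2 * bar F q.1 x).

Fixpoint bar_exp (F : fieldType) (G : zmodType) (C : set G) (j : nat) : G -> F :=
  if j is j'.+1 then conv (bar F C) (bar_exp F C j') else bar F [set 0].

Section SchurPartition.
Variables (F : fieldType) (G : zmodType) (D : set (set G)).
Hypothesis hD : is_schur_partition F D.
Implicit Types (C E : set G) (x y : G) (f g : G -> F).

Lemma class_eq C E x : D C -> D E -> C x -> E x -> C = E.
Proof.
case: hD => -[_ disj _] _ _ _ _ DC DE Cx Ex.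
by case: (disj C E DC DE) => // CE; have : (C `&` E) x by []; rewrite CE.
Qed.

Lemma class_cover x : exists2 E, D E & E x.
Proof. by case: hD => -[_ _ cover] _ _ _ _; have [E []] := cover x; exists E. Qed.

Lemma class_finite C : D C -> finite_set C.
Proof. by case: hD => _ fin _ _ _; apply: fin. Qed.

Lemma class_neq0 C : D C -> C !=set0.
Proof. by case: hD => -[neq0 _ _] _ _ _ _; apply: neq0. Qed.

Lemma class0 : D [set 0].
Proof. by case: hD. Qed.

Lemma class_inv C : D C -> D (inv_set C).
Proof. by case: hD => _ _ _ inv _; apply: inv. Qed.

Lemma class_same_class C x y : D C -> C x -> same_class D x y -> C y.
Proof. by move=> DC Cx [E [DE Ex Ey]]; rewrite (class_eq DC DE Cx Ex). Qed.

Lemma same_class_sym x y : same_class D x y -> same_class D y x.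
Proof. by case=> E [DE Ex Ey]; exists E. Qed.

Lemma S_subset_same_class X x y : S_subset D X -> X x -> same_class D x y -> X y.
Proof.
case=> Ds [DsD ->] [E DsE Ex] xy.
by exists E => //; apply: class_same_class (DsD _ DsE) Ex xy.
Qed.

Lemma schur_span_const f C x y : schur_span D f -> D C -> C x -> C y -> f x = f y.
Proof.
case=> s [sD ->] DC Cx Cy; apply: eq_big_seq => q /sD Dq; congr (_ * _).
case: hD => -[_ disj _] _ _ _ _; rewrite /bar.
case: (disj _ _ DC Dq) => [<-|Cq0]; first by rewrite !mem_set.
have notq z : C z -> ~ q.1 z by move=> Cz qz; have : (C `&` q.1) z by []; rewrite Cq0.
by rewrite !memNset //; apply: notq.
Qed.

Lemma conv_barlE C f x : finite_set C ->
  conv (bar F C) f x = \sum_(y <- fset_set C) f (x - y).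
Proof.
move=> finC; rewrite /conv; have -> : [set y | bar F C y != 0] = C.
  apply/seteqP; split => y /=; rewrite /bar.
    by case: (boolP (y \in C)) => [/set_mem //|]; rewrite eqxx.
  by move=> Cy; rewrite mem_set // oner_neq0.
rewrite fsbig_finite //; apply: eq_big_seq => y; rewrite in_fset_set // => /set_mem Cy.
by rewrite /bar mem_set // mul1r.
Qed.

Lemma schur_span0 : schur_span D (fun=> 0 : F).
Proof. by exists [::]; split => //; apply: funext => x; rewrite big_nil. Qed.

Lemma schur_spanZD c f g : schur_span D f -> schur_span D g ->
  schur_span D (fun x => c * f x + g x).
Proof.
case=> s [sD ->] [t [tD ->]]; exists ([seq (q.1, c * q.2) | q <- s] ++ t); split.
  by move=> q; rewrite mem_cat => /orP[/mapP[q' /sD ? ->]|/tD].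
apply: funext => x /=; rewrite big_cat big_map /= mulr_sumr.
by congr (_ + _); apply: eq_bigr => q _; rewrite mulrA.
Qed.

Lemma schur_span_bar C : D C -> schur_span D (bar F C).
Proof.
move=> DC; exists [:: (C, 1)]; split; first by move=> q; rewrite inE => /eqP ->.
by apply: funext => x; rewrite big_seq1 mul1r.
Qed.

Lemma schur_span_conv_bar C f : D C -> schur_span D f -> schur_span D (conv (bar F C) f).
Proof.
move=> DC [s [sD ->]]; have finC := class_finite DC.
elim: s sD => [|q s IHs] sD.
  suff -> : conv (bar F C) (fun x => \sum_(q <- [::]) q.2 * bar F q.1 x) = fun=> 0.
    exact: schur_span0.
  by apply: funext => x; rewrite conv_barlE //; apply: big1 => y _; rewrite big_nil.
have -> : conv (bar F C) (fun x => \sum_(p <- q :: s) p.2 * bar F p.1 x) =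
  fun x => q.2 * conv (bar F C) (bar F q.1) x +
           conv (bar F C) (fun x => \sum_(p <- s) p.2 * bar F p.1 x) x.
  apply: funext => x; rewrite !conv_barlE // mulr_sumr -big_split /=.
  by apply: eq_bigr => y _; rewrite big_cons.
apply: schur_spanZD; last by apply: IHs => p ps; apply: sD; rewrite inE ps orbT.
have Dq : D q.1 by apply: sD; rewrite inE eqxx.
by case: hD => _ _ _ _ /(_ _ _ DC Dq).
Qed.

Lemma schur_span_bar_exp C j : D C -> schur_span D (bar_exp F C j).
Proof.
move=> DC; elim: j => [|j IHj] /=; last exact: schur_span_conv_bar.
exact/schur_span_bar/class0.
Qed.

End SchurPartition.

Section CharZero.
Variables (F : fieldType) (G : zmodType) (D : set (set G)).
Hypotheses (hF : [pchar F] =i pred0) (hD : is_schur_partition F D).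
Implicit Types (A B C E : set G) (x y : G).

Lemma pchar0_natrI : injective (fun k : nat => k%:R : F).
Proof.
move=> a b; wlog ab : a b / (a <= b)%N => [W|].
  by case/orP: (leq_total a b) => /W // W' /esym/W'.
rewrite /= -(subnKC ab) natrD -{1}[a%:R]addr0 => /addrI/esym/eqP.
by rewrite ((pcharf0P F).1 hF) => /eqP ->; rewrite addn0.
Qed.

Lemma bar_exp_count C j x : finite_set C ->
  bar_exp F C j x = (sum_count (fun u : fset_set C => val u) j x)%:R.
Proof.
move=> finC; elim: j x => [|j IHj] x /=.
  by rewrite sum_count0 /bar classical_sets.in_set1.
rewrite conv_barlE // sum_countS natr_sum big_seq_fsetE /=.
by apply: eq_bigr => u _; rewrite IHj.
Qed.

Lemma class_pow_lift C (p N : nat) w y : D C -> prime p -> p.-nat N ->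
  {in C &, injective (fun x => x *+ N)} -> C w -> same_class D (w *+ N) y ->
  exists2 w', C w' & y = w' *+ N.
Proof.
move=> DC p_pr pN injN Cw [E [DE Ew Ey]].
have finC := class_finite hD DC.
pose e (u : fset_set C) := val u.
have Ce u : C (e u) by apply/set_mem; rewrite -(in_fset_set finC) fsvalP.
have wC : w \in fset_set C by rewrite in_fset_set // mem_set.
have count_eq : sum_count e N (w *+ N) = sum_count e N y.
  apply: pchar0_natrI; rewrite /= -!bar_exp_count //.
  exact: schur_span_const (schur_span_bar_exp hD N DC) DE Ew Ey.
have roots_w : #|[set u | e u *+ N == w *+ N]%SET| = 1%N.
  rewrite -(cards1 [` wC]%fset); apply: eq_card => u; rewrite !inE.
  by apply/eqP/eqP => [euw|-> //]; apply: val_inj; apply: injN; rewrite ?mem_set.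
have roots_y : (#|[set u | e u *+ N == y]%SET| = 1 %[mod p])%N.
  by rewrite -roots_w -!(sum_count_pnat_mod _ _ pN) count_eq.
have /card_gt0P [u] : (0 < #|[set u | e u *+ N == y]%SET|)%N.
  rewrite lt0n; apply/eqP => roots0; move: roots_y.
  by rewrite roots0 mod0n modn_small // prime_gt1.
by rewrite finset.inE => /eqP <-; exists (e u).
Qed.

Lemma conv_bar_neq0 A B x : finite_set A ->
  conv (bar F A) (bar F B) x != 0 <-> exists2 y, A y & B (x - y).
Proof.
move=> finA; rewrite conv_barlE // -natr_sum ((pcharf0P F).1 hF); split.
  move=> /eqP nz; apply: contrapT => noy; apply: nz; apply: big1_seq => y.
  rewrite in_fset_set // => /set_mem Ay; case: (boolP (x - y \in B)) => // /set_mem By.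
  by case: noy; exists y.
by case=> y Ay By; rewrite (bigD1_seq y) ?fset_uniq ?in_fset_set ?mem_set.
Qed.

(* Coefficients of the product of [bar A] and [bar B^*] are constant on classes. *)
Lemma class_subr_lift A B C x a b c : D A -> D B -> D C ->
  C x -> A a -> B b -> x = a - b -> C c -> exists a' b', [/\ A a', B b' & c = a' - b'].
Proof.
move=> DA DB DC Cx Aa Bb xE Cc; have finA := class_finite hD DA.
have Phi_span : schur_span D (conv (bar F A) (bar F (inv_set B))).
  by case: hD => _ _ _ _ /(_ _ _ DA (class_inv hD DB)) [s [sD ->]]; exists s.
have Phi_xc := schur_span_const hD Phi_span DC Cx Cc.
have : conv (bar F A) (bar F (inv_set B)) c != 0.
  rewrite -Phi_xc conv_bar_neq0 //; exists a => //.
  by exists b => //; rewrite xE addrAC subrr add0r.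
case/conv_bar_neq0 => // a' Aa' [b' Bb' cE]; exists a', b'; split => //.
by rewrite cE addrC subrK.
Qed.

End CharZero.

Lemma pow_mod1_gt (p n M : nat) : (0 < n)%N -> prime p -> coprime p n ->
  exists2 J, (0 < J)%N & p ^ J = 1 %[mod n] /\ (M < p ^ J)%N.
Proof.
move=> n_gt0 p_pr co_pn; exists (totient n * M.+1)%N.
  by rewrite muln_gt0 totient_gt0 n_gt0.
split; first by rewrite expnM -modnXm Euler_exp_totient // modnXm exp1n.
apply: leq_ltn_trans (ltn_expl _ (prime_gt1 p_pr)).
by rewrite (leq_trans (leqnSn M)) // leq_pmull // totient_gt0.
Qed.

Lemma finite_set_bound (T : choiceType) (A : set T) (f : T -> nat) :
  finite_set A -> exists M, forall a, A a -> (f a <= M)%N.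
Proof.
move=> finA; exists (\max_(a <- fset_set A) f a)%N => a Aa.
by apply: leq_bigmax_seq; rewrite ?in_fset_set ?mem_set.
Qed.

Lemma int_mul_bounded_eq0 (L : nat) (d e : int) : L%:Z * d = e -> (`|e| < L)%N -> d = 0.
Proof. nia. Qed.

Lemma int_bounded_cancel (L M : nat) (t0 tw tc tz : int) : (2 * M < L)%N ->
  (`|t0| <= M)%N -> (`|tw| <= M)%N -> (`|tc| <= M)%N ->
  `|tz|%N = (`|t0| * L.-1)%N -> tc = tw * L%:Z - tz -> tc = tw.
Proof.
move=> LM t0M twM tcM tzE tcE.
have L1 : (L.-1)%:Z = L%:Z - 1 by lia.
have [tzE'|tzE'] : tz = t0 * (L.-1)%:Z \/ tz = - (t0 * (L.-1)%:Z) by lia.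
- have /int_mul_bounded_eq0 : L%:Z * (tw - t0) = tc - t0 by rewrite tcE tzE' L1; ring.
  lia.
- have /int_mul_bounded_eq0 : L%:Z * (tw + t0) = tc + t0 by rewrite tcE tzE' L1; ring.
  lia.
Qed.

Section ZxZn.
Variable m : nat.
Local Notation n := m.+1.
Local Notation G := (ZxZn m).

Lemma Zp_mulrn_mod (a : 'I_n) k : a *+ k = a *+ (k %% n).
Proof. by apply: val_inj; rewrite !Zp_mulrn /= modnMmr. Qed.

Lemma Zp_mulrn_dvdn (a : 'I_n) k : (n %| k)%N -> a *+ k = 0.
Proof. by move=> /eqP nk; rewrite Zp_mulrn_mod nk mulr0n. Qed.

Lemma Zp_mulrn_mod1 (a : 'I_n) k : k = 1 %[mod n] -> a *+ k = a.
Proof. by move=> k1; rewrite Zp_mulrn_mod k1 -Zp_mulrn_mod mulr1n. Qed.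

Lemma Zp_mulrn_inj N : coprime N n -> injective (fun a : 'I_n => a *+ N).
Proof.
move=> co_Nn a b /eqP; rewrite -subr_eq0 -mulrnBl => /eqP abN0.
have [u _ uN1] := Bezoutr N (ltn0Sn m); rewrite (eqP co_Nn) in uN1.
have : (a - b) *+ (1 + u * N) = 0 by apply: Zp_mulrn_dvdn.
by rewrite mulrnDr mulr1n mulnC mulrnA abN0 mul0rn addr0 => /eqP; rewrite subr_eq0 => /eqP.
Qed.

Lemma ZxZn_mulrn_inj N : (0 < N)%N -> coprime N n -> injective (fun x : G => x *+ N).
Proof.
move=> N_gt0 co_Nn [x1 x2] [y1 y2]; rewrite /= !pairMnE => -[/pmulrnI xy1 /Zp_mulrn_inj xy2].
by rewrite xy1 // xy2.
Qed.

Lemma Zn_sub_mulrn_pred x L : (0 < L)%N -> L = 1 %[mod n] -> Zn_sub m (x *+ L.-1).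
Proof.
move=> L_gt0 L1; have /dvdnP[k Lk] : (n %| L.-1)%N by rewrite -subn1 -eqn_mod_dvd ?L1.
exists (x.1 * k%:Z); rewrite pairMnE Zp_mulrn_dvdn ?Lk ?dvdn_mull //.
by rewrite -mulr_natr natz PoszM; congr pair; ring.
Qed.

End ZxZn.

Section SchurRingZxZn.
Variables (F : fieldType) (m : nat) (D : set (set (ZxZn m))).
Hypotheses (hF : [pchar F] =i pred0) (hD : is_schur_partition F D)
  (hZ : S_subgroup D (Zn_sub m)).
Local Notation n := m.+1.
Local Notation G := (ZxZn m).
Implicit Types (C E : set G) (x y : G).

Lemma Zn_sub_same_class x y : Zn_sub m x -> same_class D x y -> Zn_sub m y.
Proof. exact: (S_subset_same_class hD hZ.2). Qed.

Lemma Zn_sub_class_mulrn q Q x y : prime q -> q.-nat Q -> Zn_sub m x ->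
  same_class D (x *+ Q) y -> exists2 w, Zn_sub m w & y = w *+ Q.
Proof.
move=> q_pr qQ Hx xQy; have [E DE Ex] := class_cover hD x.
have EH z : E z -> Zn_sub m z by move=> Ez; apply: Zn_sub_same_class Hx _; exists E.
have Q_gt0 : (0 < Q)%N by case/andP: qQ.
have injQ : {in E &, injective (fun z => z *+ Q)}.
  move=> _ _ /set_mem/EH[k ->] /set_mem/EH[k' ->].
  by rewrite !pairMnE /= => -[/(pmulrnI Q_gt0) ->].
have [w Ew ->] := class_pow_lift hF hD DE q_pr qQ injQ Ex xQy.
by exists w => //; apply: EH.
Qed.

Lemma Zn_sub_class_dvdn x y : Zn_sub m x -> same_class D x y -> (`|x.1| %| `|y.1|)%N.
Proof.
move=> Hx xy; have [s' yE] := Zn_sub_same_class Hx xy.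
have [s xE] := Hx; rewrite xE yE /= !abszM dvdn_mul //.
have [s0|s_neq0] := eqVneq s 0.
  have x0 : [set 0] x by rewrite xE s0 mulr0.
  have /= y0 := class_same_class hD (class0 hD) x0 xy.
  by move: yE; rewrite y0 s0 => -[/esym/eqP]; rewrite mulf_eq0 => /orP[|/eqP->].
apply/dvdn_partP; first by rewrite absz_gt0.
move=> q; rewrite mem_primes => /and3P[q_pr _ _].
set Q := partn `|s| q.
have qQ : q.-nat Q by rewrite /Q p_part pnatX pnat_id.
have [s0 sE] : exists s0, s = s0 * Q%:Z.
  by exists (s %/ Q%:Z)%Z; rewrite divzK // dvdzE absz_nat dvdn_part.
have [_ [k ->] yw] : exists2 w, Zn_sub m w & y = w *+ Q.
  apply: (Zn_sub_class_mulrn (x := (n%:Z * s0, 0)) q_pr qQ); first by exists s0.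
  by rewrite pairMnE mul0rn -mulr_natr natz -mulrA -sE -xE.
move: yw; rewrite yE pairMnE /= -mulr_natr natz -mulrA => -[/mulfI s'E _].
by rewrite s'E // abszM absz_nat dvdn_mull.
Qed.

Lemma Zn_sub_class_norm x y : Zn_sub m x -> same_class D x y ->
  y.2 = 0 /\ `|y.1|%N = `|x.1|%N.
Proof.
move=> Hx xy; split; first by have [k ->] := Zn_sub_same_class Hx xy.
apply/eqP; rewrite eqn_dvd (Zn_sub_class_dvdn Hx xy).
by rewrite (Zn_sub_class_dvdn (Zn_sub_same_class Hx xy) (same_class_sym xy)).
Qed.

Lemma ZxZn_class_pow_lift C p i w y : D C -> prime p -> coprime p n -> C w ->
  same_class D (w *+ p ^ i) y -> exists2 w', C w' & y = w' *+ p ^ i.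
Proof.
move=> DC p_pr co_pn; apply: (class_pow_lift hF hD DC p_pr); first by rewrite pnatX pnat_id.
by move=> ? ? _ _; apply: ZxZn_mulrn_inj; rewrite ?expn_gt0 ?prime_gt0 ?coprimeXl.
Qed.

Lemma ZxZn_class_pow_pow_lift C E x p J y : D C -> D E -> C x -> E (x *+ p) ->
  prime p -> coprime p n -> (0 < J)%N -> same_class D (x *+ p ^ J) y ->
  exists2 w, C w /\ E (w *+ p) & y = w *+ p ^ J.
Proof.
move=> DC DE Cx Exp p_pr co_pn J_gt0 xJy.
have [e Ee ->] : exists2 e, E e & y = e *+ p ^ J.-1.
  by apply: ZxZn_class_pow_lift DE p_pr co_pn Exp _; rewrite -mulrnA -expnS prednK.
have xpe : same_class D (x *+ p ^ 1) e by exists E.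
have [w Cw eE] := ZxZn_class_pow_lift DC p_pr co_pn Cx xpe.
by exists w; rewrite -?eE // eE expn1 -mulrnA -expnS prednK.
Qed.

Lemma same_class_mulrn_prime C x c p : D C -> C x -> C c -> prime p -> coprime p n ->
  same_class D (x *+ p) (c *+ p).
Proof.
move=> DC Cx Cc p_pr co_pn.
have [M CM] := finite_set_bound (fun c : G => `|c.1|%N) (class_finite hD DC).
have [J J_gt0 [LE1 LM]] := pow_mod1_gt (2 * M) (ltn0Sn m) p_pr co_pn.
set L := (p ^ J)%N in LE1 LM; have L_gt0 : (0 < L)%N by rewrite expn_gt0 prime_gt0.
have [E DE Exp] := class_cover hD (x *+ p).
have [E' DE' ExL] := class_cover hD (x *+ L).
have Hh := Zn_sub_mulrn_pred x L_gt0 LE1.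
have [Hc DHc Hch] := class_cover hD (x *+ L.-1).
have [y [z [E'y Hcz cE]]] : exists y z, [/\ E' y, Hc z & c = y - z].
  apply: (class_subr_lift hF hD DE' DHc DC Cx ExL Hch _ Cc).
  by rewrite -[in x *+ L](prednK L_gt0) mulrS addrK.
have [z2 z1] : z.2 = 0 /\ `|z.1|%N = `|(x *+ L.-1).1|%N.
  by apply: Zn_sub_class_norm Hh _; exists Hc.
have [w [Cw Ewp] yE] : exists2 w, C w /\ E (w *+ p) & y = w *+ L.
  by apply: ZxZn_class_pow_pow_lift DC DE Cx Exp p_pr co_pn J_gt0 _; exists E'.
suff -> : c = w by exists E.
have c1 : c.1 = w.1.
  apply: (int_bounded_cancel LM (CM _ Cx) (CM _ Cw) (CM _ Cc) (tz := z.1)).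
    by rewrite z1 pairMnE /= -mulr_natr abszM natz absz_nat.
  by rewrite cE yE /= pairMnE /= -mulr_natr natz.
have c2 : c.2 = w.2 by rewrite cE yE /= pairMnE /= z2 subr0 Zp_mulrn_mod1.
exact: injective_projections c1 c2.
Qed.

Lemma pow_set_prime_class C p : D C -> prime p -> coprime p n -> D (pow_set C p).
Proof.
move=> DC p_pr co_pn; have [x Cx] := class_neq0 hD DC.
have [E DE Exp] := class_cover hD (x *+ p).
suff -> : pow_set C p = E by [].
apply/seteqP; split => [_ [c Cc <-]|y Ey].
  have [E2 [DE2 E2xp E2cp]] := same_class_mulrn_prime DC Cx Cc p_pr co_pn.
  by rewrite (class_eq hD DE DE2 Exp E2xp).
have xpy : same_class D (x *+ p ^ 1) y by exists E.
by have [w Cw ->] := ZxZn_class_pow_lift DC p_pr co_pn Cx xpy; exists w.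
Qed.

Lemma pow_set_pos_class C (k : nat) : D C -> (0 < k)%N -> coprime k n -> D (pow_set C k).
Proof.
elim/ltn_ind: k C => k IHk C DC k_gt0 co_kn.
have [k_le1|k_gt1] := leqP k 1.
  have -> : k = 1%N by lia.
  by rewrite pow_set1.
have p_pr := pdiv_prime k_gt1; have /dvdnP[k' kE] := pdiv_dvd k.
have p_gt1 := prime_gt1 p_pr.
have k'_gt0 : (0 < k')%N by move: k_gt0; rewrite kE muln_gt0 => /andP[].
rewrite kE PoszM mulrC -pow_setM; apply: IHk => //.
- by rewrite kE ltn_Pmulr.
- by apply: pow_set_prime_class; rewrite // (coprime_dvdl (pdiv_dvd k)).
- by apply: coprime_dvdl co_kn; rewrite kE dvdn_mulr.
Qed.

End SchurRingZxZn.

Theorem theorem3p1 (F : fieldType) (hF : [pchar F] =i pred0) (m : nat)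
  (D : set (set (ZxZn m))) (hD : is_schur_partition F D)
  (hZ : S_subgroup D (Zn_sub m))
  (C : set (ZxZn m)) (hC : S_subset D C) :
  D C <-> (forall k : int, coprime `|k|%N m.+1 -> D (pow_set C k)).
Proof.
split=> [DC [[|k]|k] /= co_kn|powC]; last by rewrite -(pow_set1 C); apply: powC; rewrite coprime1n.
- by rewrite (pow_set0 (class_neq0 hD DC)); apply: class0 hD.
- exact: (pow_set_pos_class hF hD hZ DC (ltn0Sn k) co_kn).
- by rewrite NegzE pow_setN; apply/(class_inv hD)/(pow_set_pos_class hF hD hZ DC).
Qed.
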